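(* Let $G$ be a graph whose $\operatorname{IR}$-graph $H=G(\operatorname{IR})$ is connected. Let $X=\{x_1,\dots,x_r\}$ be an $\operatorname{IR}(G)$-set such that exactly three vertices $x_1,x_2,x_3$ have positive degree in $G[X]$. For $i=1,2,3$ let $x_i'\in\operatorname{EPN}(x_i,X)$, and let $X'=(X-\{x_1,x_2,x_3\})\cup\{x_1',x_2',x_3'\}$. If $d_H(X,X')=3$, then $H$ contains an induced $4$-cycle, or $H$ contains an induced subgraph isomorphic to the double star $S(2,2)$ in which $X$ and $X'$ are leaves at distance $3$ from each other (antipodal leaves).
   Context: All graphs are finite and simple. For $G=(V,E)$, $D\subseteq V$, $v\in D$: $\operatorname{PN}(v,D)=N[v]-N[D-\{v\}]$ and $\operatorname{EPN}(v,D)=\operatorname{PN}(v,D)-D$. $D$ is irredundant if $\operatorname{PN}(v,D)\neq\varnothing$ for all $v\in D$; $\operatorname{IR}(G)$ is the maximum size of an irredundant set; an $\operatorname{IR}(G)$-set is an irredundant set of that size. $G(\operatorname{IR})$ has the $\operatorname{IR}(G)$-sets as vertices, with $D\sim D'$ iff there exist $u\in D$, $v\in D'$ with $uv\in E(G)$ and $D'=(D-\{u\})\cup\{v\}$. $d_H$ is distance in $H$. The double star $S(2,2)$ is the tree obtained by joining the centres of two copies of $K_{1,2}$ by an edge (6 vertices, diameter 3). *)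

(* A simple graph G is a symmetric irreflexive relation e on a finType T. *)
From mathcomp Require Import all_boot.
Set Implicit Arguments. Unset Strict Implicit. Unset Printing Implicit Defensive.

Section IRGraph.
Variables (T : finType) (e : rel T).

Definition cnbhd (v : T) : {set T} := [set u | (u == v) || e v u].
Definition cnbhdS (D : {set T}) : {set T} := \bigcup_(w in D) cnbhd w.

Definition PN (v : T) (D : {set T}) : {set T} := cnbhd v :\: cnbhdS (D :\ v).
Definition EPN (v : T) (D : {set T}) : {set T} := PN v D :\: D.

Definition irredundant (D : {set T}) : bool := [forall v in D, PN v D != set0].

(* IR(G): maximum size of an irredundant set (set0 is irredundant) *)
Definition IR : nat := \max_(D : {set T} | irredundant D) #|D|.

Definition IRset (D : {set T}) : bool := irredundant D && (#|D| == IR).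

Definition IRadj (D D' : {set T}) : bool :=
  [&& IRset D, IRset D' &
   [exists u in D, exists v in D', e u v && (D' == (D :\ u) :|: [set v])]].

Definition IRconnected : Prop :=
  forall D D', IRset D -> IRset D' -> connect IRadj D D'.

Definition IRdist_le (D D' : {set T}) (n : nat) : Prop :=
  IRset D /\
  exists p : seq {set T}, size p <= n /\ path IRadj D p /\ last D p = D'.

Definition IRdist (D D' : {set T}) (n : nat) : Prop :=
  IRdist_le D D' n /\ forall m, m < n -> ~ IRdist_le D D' m.

Definition posdeg_in (X : {set T}) (x : T) : bool := [exists y in X, e x y].

Definition has_induced_C4 : Prop :=
  exists A B C D : {set T},
    uniq [:: A; B; C; D] /\
    IRadj A B /\ IRadj B C /\ IRadj C D /\ IRadj D A /\
    ~~ IRadj A C /\ ~~ IRadj B D.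

Definition has_induced_S22_antipodal (X X' : {set T}) : Prop :=
  exists a c1 c2 b : {set T},
    uniq [:: X; a; c1; c2; X'; b] /\
    IRadj X c1 /\ IRadj a c1 /\ IRadj c1 c2 /\ IRadj c2 X' /\ IRadj c2 b /\
    ~~ IRadj X a /\ ~~ IRadj X c2 /\ ~~ IRadj X X' /\ ~~ IRadj X b /\
    ~~ IRadj a c2 /\ ~~ IRadj a X' /\ ~~ IRadj a b /\
    ~~ IRadj c1 X' /\ ~~ IRadj c1 b /\ ~~ IRadj X' b.

End IRGraph.

From mathcomp Require Import all_boot.
Set Implicit Arguments. Unset Strict Implicit. Unset Printing Implicit Defensive.

(** Let Y be the vertices of X that are isolated in G[X], so X = Y + x1 x2 x3.
  A walk of length 3 from X to X' trades x1, x2, x3 for x1', x2', x3' one per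
  step, each time along an edge; as x_j' is adjacent to no vertex of X but x_j,
  the walk is X = Y+abc, D1 = Y+a'bc, D2 = Y+a'b'c, X' = Y+a'b'c' for some
  ordering (a, b, c) of x1, x2, x3.  A set Y+pqr is an IR-set as soon as each of
  p, q, r has a private neighbour outside N[Y], and two commuting exchanges
  p -> p', q -> q' at an IR-set A span an induced 4-cycle of H when all four sets
  involved are IR-sets.  Such a square exists at D1 if bc is an edge (exchange b
  and c for private neighbours in D1), or if a'b' is an edge (exchange b -> b'
  and a' for a private neighbour in D2), or if a'c' is not an edge (b -> b',
  c -> c'); it exists at X if ac is not an edge (a -> a', b -> b').  Otherwise
  D1 - c + a and D2 - a' + c' are IR-sets hanging off D1 and D2, and together
  with the walk they induce S(2,2) with X and X' antipodal. *)

Section IRGraph.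
Variables (T : finType) (e : rel T).
Hypotheses (e_sym : symmetric e) (e_irr : irreflexive e).
Implicit Types (A D S Y : {set T}).

Lemma edge_neq x y : e x y -> x != y.
Proof. by apply: contraTneq => ->; rewrite e_irr. Qed.

Lemma cnbhdSP D w :
  reflect (exists2 z, z \in D & w \in cnbhd e z) (w \in cnbhdS e D).
Proof. exact: bigcupP. Qed.

Lemma cnbhdSU A B : cnbhdS e (A :|: B) = cnbhdS e A :|: cnbhdS e B.
Proof. exact: bigcup_setU. Qed.

Lemma sub_cnbhdS D : D \subset cnbhdS e D.
Proof. by apply/subsetP => z zD; apply/cnbhdSP; exists z; rewrite // inE eqxx. Qed.

Lemma notin_cnbhdS D x :
  x \notin D -> {in D, forall z, ~~ e z x} -> x \notin cnbhdS e D.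
Proof.
move=> xD nDx; apply/cnbhdSP => -[z zD]; rewrite inE => /predU1P[xz|].
  by rewrite xz zD in xD.
by apply/negP; exact: nDx.
Qed.

Lemma PNP v D w :
  reflect (w \in cnbhd e v /\ {in D, forall z, z != v -> w \notin cnbhd e z})
          (w \in PN e v D).
Proof.
rewrite /PN in_setD andbC; apply: (iffP andP) => -[wv wD]; split=> //.
  by move=> z zD zv; apply: contra wD => wz; apply/cnbhdSP; exists z; rewrite // !inE zv.
by apply/cnbhdSP => -[z /setD1P[zv zD]]; apply/negP; exact: wD.
Qed.

Lemma PN_setUl Y S s : s \notin Y -> PN e s (Y :|: S) = PN e s S :\: cnbhdS e Y.
Proof.
move=> sY; rewrite /PN; have -> : (Y :|: S) :\ s = Y :|: S :\ s.
  by apply/setP => z; rewrite !inE; case: eqP => // ->; rewrite (negbTE sY).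
by rewrite cnbhdSU setDDl setUC.
Qed.

Lemma irredundant_setU Y S :
  {in Y &, forall y z, ~~ e y z} -> {in S, forall s, s \notin cnbhdS e Y} ->
  {in S, forall s, PN e s S :\: cnbhdS e Y != set0} -> irredundant e (Y :|: S).
Proof.
move=> Y_indep S_out S_PN; apply/forallP => v; apply/implyP => /setUP[vY|vS].
  apply/set0Pn; exists v; apply/PNP; split; first by rewrite inE eqxx.
  move=> z /setUP[zY|zS] zv; rewrite inE negb_or eq_sym zv /=; first exact: Y_indep.
  apply: contra (S_out z zS) => ezv; apply/cnbhdSP; exists v => //.
  by rewrite inE e_sym ezv orbT.
have vY : v \notin Y by apply: contra (S_out v vS); apply/subsetP/sub_cnbhdS.
by rewrite PN_setUl //; exact: S_PN.
Qed.

Lemma private_nbr Y S p q :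
  irredundant e (Y :|: S) -> p \in S -> p \notin Y -> q \in S -> e p q ->
  exists w, [/\ e p w, w \notin cnbhdS e Y & {in S, forall z, z != p -> w \notin cnbhd e z}].
Proof.
move=> IS pS pY qS epq.
have /set0Pn[w] : PN e p (Y :|: S) != set0 by move/forallP/(_ p): IS; rewrite inE pS orbT.
rewrite PN_setUl // in_setD => /andP[wY /PNP[wp wS]]; exists w; split=> //.
have qp : q != p by rewrite eq_sym edge_neq.
by move: wp (wS q qS qp); rewrite !inE => /predU1P[-> | //]; rewrite e_sym epq orbT.
Qed.

Lemma EPN_notin D x x' : x' \in EPN e x D -> x' \notin D.
Proof. by case/setDP. Qed.

Lemma EPN_edge D x x' : x \in D -> x' \in EPN e x D -> e x x'.
Proof.
rewrite /EPN => xD /setDP[/PNP[x'x _] x'D]; move: x'x; rewrite inE => /predU1P[x'x|//].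
by rewrite x'x xD in x'D.
Qed.

Lemma EPN_nedge D x x' z : x' \in EPN e x D -> z \in D -> z != x -> ~~ e z x'.
Proof.
by rewrite /EPN => /setDP[/PNP[_ x'N] _] zD zx; move: (x'N z zD zx); rewrite inE negb_or => /andP[].
Qed.

Lemma EPN_neq D x x' y y' :
  x \in D -> x' \in EPN e x D -> y' \in EPN e y D -> x != y -> x' != y'.
Proof.
move=> xD x'E y'E xy; apply: contraTneq (EPN_edge xD x'E) => ->.
exact: EPN_nedge y'E xD xy.
Qed.

Lemma EPN_of_adj D x x' z : x' \in EPN e x D -> z \in D -> e z x' -> x' \in EPN e z D.
Proof.
move=> x'E zD ezx'; suff -> : z = x by [].
by apply/eqP; apply: contraTT ezx'; exact: EPN_nedge x'E zD.
Qed.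

Definition swap D u v := D :\ u :|: [set v].

Lemma IRadj_swap D u v :
  u \in D -> e u v -> IRset e D -> IRset e (swap D u v) -> IRadj e D (swap D u v).
Proof.
move=> uD euv ID ID'; apply/and3P; split=> //; apply/existsP; exists u.
by rewrite uD; apply/existsP; exists v; rewrite /swap eqxx !inE eqxx orbT euv.
Qed.

Lemma IRadjP D D' :
  reflect [/\ IRset e D, IRset e D' &
           exists u v, [/\ u \in D, v \notin D, e u v & D' = swap D u v]]
          (IRadj e D D').
Proof.
apply: (iffP idP) => [|[ID ID' [u [v [uD _ euv D'E]]]]]; last first.
  by rewrite D'E in ID' *; apply: IRadj_swap.
case/and3P=> ID ID' /existsP[u /andP[uD /existsP[v /and3P[_ euv /eqP D'E]]]].
split=> //; exists u, v; split=> //.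
have : #|D'| = #|D| by case/andP: ID => _ /eqP ->; case/andP: ID' => _ /eqP ->.
rewrite D'E setUC cardsU1 (cardsD1 u D) uD in_setD1 eq_sym edge_neq //=.
by move/(congr1 (subn^~ #|D :\ u|)); rewrite !addnK; case: (v \in D).
Qed.

Lemma IRadj_sym D D' : IRadj e D D' -> IRadj e D' D.
Proof.
case/IRadjP=> ID ID' [u [v [uD vD euv D'E]]].
have DE : D = swap D' v u.
  apply/setP => z; rewrite D'E !inE.
  case: (eqVneq z u) => [->|_]; first by rewrite uD orbT.
  by case: (eqVneq z v) => [->|_] /=; rewrite ?(negbTE vD) ?orbF.
rewrite DE; apply: IRadj_swap; rewrite -1?DE //; last by rewrite e_sym.
by rewrite D'E !inE eqxx orbT.
Qed.

(* Along an edge D -> D - u + v of H, D :\: D' = [set u] and D' :\: D = [set v]. *)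
Lemma nIRadj_setD D D' x z :
  x \in D :\: D' -> z \in D :\: D' -> x != z -> ~~ IRadj e D D'.
Proof.
move=> xDD' zDD' xz; apply/negP => /IRadjP[_ _ [u [v [_ _ _ D'E]]]].
have old y : y \in D :\: D' -> y = u.
  by rewrite D'E !inE; case: eqP => //= _; case: (y \in D); rewrite ?andbF.
by rewrite (old x xDD') (old z zDD') eqxx in xz.
Qed.

Lemma nIRadj_nedge D D' x y :
  x \in D :\: D' -> y \in D' :\: D -> ~~ e x y -> ~~ IRadj e D D'.
Proof.
move=> xDD' yD'D; apply: contraNN => /IRadjP[_ _ [u [v [_ _ euv D'E]]]].
move: xDD' yD'D; rewrite D'E !inE; case: (eqVneq x u) => [-> _|_]; last first.
  by case: (x \in D); rewrite ?andbF.
by case/andP=> yD; rewrite (negbTE yD) andbF /= => /eqP ->.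
Qed.

Lemma setD_neq A D x : x \in A -> x \notin D -> A != D.
Proof. by move=> xA xD; apply: contraNneq xD => <-. Qed.

Lemma card_last_setD D p : path (IRadj e) D p -> #|last D p :\: D| <= size p.
Proof.
elim: p D => [|D1 p IHp] D /=; first by rewrite setDv cards0.
case/andP=> /IRadjP[_ _ [u [v [_ _ _ D1E]]]] /IHp le_p.
have sub : last D1 p :\: D \subset (last D1 p :\: D1) :|: [set v].
  apply/subsetP => z /setDP[zL zD]; rewrite !inE zL andbT.
  by case: (boolP (z \in D1)) => //; rewrite D1E !inE (negbTE zD) andbF.
by rewrite (leq_trans (subset_leq_card sub)) // (leq_trans (leq_card_setU _ _)) // cards1 addn1.
Qed.

Lemma swap3_setD D u1 v1 u2 v2 u3 v3 :
  let D3 := swap (swap (swap D u1 v1) u2 v2) u3 v3 in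
  {subset D3 :\: D <= [:: v1; v2; v3]} /\ {subset D :\: D3 <= [:: u1; u2; u3]}.
Proof.
split=> z; rewrite !inE; case: (z \in D); rewrite ?andbF ?andbT //=;
  by case: (z == u3); case: (z == v3); case: (z == u2); case: (z == v2);
     case: (z == u1); case: (z == v1); rewrite ?orbT.
Qed.

Lemma mem_set3 (z p q r : T) : (z \in [set p; q; r]) = (z \in [:: p; q; r]).
Proof. by rewrite !inE orbA. Qed.

Lemma set3_eq (x1 x2 x3 y1 y2 y3 : T) :
  [:: x1; x2; x3] =i [:: y1; y2; y3] -> [set x1; x2; x3] = [set y1; y2; y3].
Proof. by move=> Exy; apply/setP => z; rewrite !mem_set3. Qed.

Lemma walk3_exchanges X p (x1 x2 x3 y1 y2 y3 : T) :
  path (IRadj e) X p -> size p <= 3 ->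
  last X p = X :\: [set x1; x2; x3] :|: [set y1; y2; y3] ->
  uniq [:: x1; x2; x3] -> uniq [:: y1; y2; y3] ->
  {subset [set x1; x2; x3] <= X} -> {subset [set y1; y2; y3] <= ~: X} ->
  exists u1 u2 u3 v1 v2 v3,
    [/\ [set u1; u2; u3] = [set x1; x2; x3], [set v1; v2; v3] = [set y1; y2; y3],
        uniq [:: u1; u2; u3], [/\ e u1 v1, e u2 v2 & e u3 v3] &
        [/\ IRset e (swap X u1 v1), IRset e (swap (swap X u1 v1) u2 v2),
            IRset e (swap (swap (swap X u1 v1) u2 v2) u3 v3) &
            last X p = swap (swap (swap X u1 v1) u2 v2) u3 v3]].
Proof.
move=> walk size_p last_p uniq_x uniq_y sub_xX sub_yX.
have xX x : x \in [:: x1; x2; x3] -> x \in X by rewrite -mem_set3 => /sub_xX.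
have yX y : y \in [:: y1; y2; y3] -> y \notin X by rewrite -mem_set3 -in_setC => /sub_yX.
have y_new : {subset [:: y1; y2; y3] <= last X p :\: X}.
  by move=> y yy; rewrite last_p !inE (negbTE (yX y yy)) andbF /=; move: yy; rewrite !inE -!orbA.
have x_old : {subset [:: x1; x2; x3] <= X :\: last X p}.
  move=> x xx; rewrite in_setD xX // andbT last_p !inE negb_or negb_and negbK.
  apply/andP; split; first by move: xx; rewrite !inE -!orbA => /or3P[]->; rewrite ?orbT.
  by apply: contraL (xX x xx) => xy; apply: yX; move: xy; rewrite !inE -!orbA.
have size3 : size p = 3.
  apply/eqP; rewrite eqn_leq size_p /=.
  apply: leq_trans (card_last_setD walk).
  by rewrite -[3]/(size [:: y1; y2; y3]) -(card_uniqP uniq_y); apply/subset_leq_card/subsetP.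
case: p size3 walk last_p y_new x_old {size_p} => [|D1 [|D2 [|D3 [|//]]]] // _.
case/and4P=> /IRadjP[_ D1_IR [u1 [v1 [_ _ e1 D1E]]]].
case/IRadjP=> _ D2_IR [u2 [v2 [_ _ e2 D2E]]].
case/IRadjP=> _ D3_IR [u3 [v3 [_ _ e3 D3E]]] _; subst D1 D2 D3 => /= last_p y_new x_old.
have [sub_v sub_u] := swap3_setD X u1 v1 u2 v2 u3 v3.
have x_u x : x \in [:: x1; x2; x3] -> x \in [:: u1; u2; u3] by move/x_old/sub_u.
have y_v y : y \in [:: y1; y2; y3] -> y \in [:: v1; v2; v3] by move/y_new/sub_v.
exists u1, u2, u3, v1, v2, v3; split=> //.
- by apply/esym/set3_eq; case: (uniq_min_size uniq_x x_u (leqnn 3)).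
- by apply/esym/set3_eq; case: (uniq_min_size uniq_y y_v (leqnn 3)).
- exact: leq_size_uniq uniq_x x_u (leqnn 3).
Qed.

Lemma swap_square_C4 A p p' q q' :
  p \in A -> q \in A -> p' \notin A -> q' \notin A -> p != q -> p' != q' ->
  e p p' -> e q q' -> IRset e A -> IRset e (swap A p p') -> IRset e (swap A q q') ->
  IRset e (swap (swap A p p') q q') -> has_induced_C4 e.
Proof.
move=> pA qA p'A q'A pq p'q' epp' eqq' IA IB ID IC.
set B := swap A p p' in IB IC *; set D := swap A q q' in ID *; set C := swap B q q' in IC *.
have neqA x y : x \in A -> y \notin A -> x != y by move=> xA yA; apply: contraNneq yA => <-.
have [[[pp' qq'] pq'] qp'] := (neqA _ _ pA p'A, neqA _ _ qA q'A, neqA _ _ pA q'A, neqA _ _ qA p'A).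
have CE : C = swap D p p'.
  apply/setP => z; rewrite !inE.
  case: (eqVneq z p) => [->|_]; first by rewrite /= (negbTE pp') (negbTE pq') andbF.
  case: (eqVneq z q) => [->|_]; first by rewrite /= (negbTE qp') (negbTE qq').
  by rewrite /= orbAC.
have qB : q \in B by rewrite !inE eq_sym pq qA.
have pB : p \notin B by rewrite !inE eqxx (negbTE pp').
have pC : p \notin C by rewrite !inE eqxx (negbTE pp') (negbTE pq') andbF.
have qC : q \notin C by rewrite !inE eqxx (negbTE qq').
have qD : q \notin D by rewrite !inE eqxx (negbTE qq').
have p'B : p' \in B by rewrite !inE eqxx orbT.
have p'C : p' \in C by rewrite !inE eqxx orbT andbT eq_sym qp'.
have p'D : p' \notin D by rewrite !inE (negbTE p'A) andbF (negbTE p'q').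
exists A, B, C, D; split.
  by rewrite /= !inE !negb_or (setD_neq pA pB) (setD_neq pA pC) (setD_neq qA qD)
    (setD_neq qB qC) (setD_neq p'B p'D) (setD_neq p'C p'D).
split; first exact: IRadj_swap.
split; first exact: IRadj_swap.
split; first by apply: IRadj_sym; rewrite CE; apply: IRadj_swap; rewrite -?CE // !inE pq pA.
split; first by apply/IRadj_sym/IRadj_swap.
split; first by apply: (nIRadj_setD (x := p) (z := q)); rewrite ?in_setD ?pA ?qA ?pC ?qC.
by apply: (nIRadj_setD (x := p') (z := q)); rewrite 1?eq_sym ?in_setD ?p'B ?qB ?p'D ?qD.
Qed.

End IRGraph.

Section IsolatedTriples.
Variables (T : finType) (e : rel T).
Hypotheses (e_sym : symmetric e) (e_irr : irreflexive e).
Variable Y : {set T}.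

Lemma set3C12 (p q r : T) : [set p; q; r] = [set q; p; r].
Proof. by apply/setP => z; rewrite !inE; case: (z == p); case: (z == q); case: (z == r). Qed.

Lemma set3C23 (p q r : T) : [set p; q; r] = [set p; r; q].
Proof. by apply/setP => z; rewrite !inE; case: (z == p); case: (z == q); case: (z == r). Qed.

Lemma set3C13 (p q r : T) : [set p; q; r] = [set r; q; p].
Proof. by apply/setP => z; rewrite !inE; case: (z == p); case: (z == q); case: (z == r). Qed.

Lemma swapU3l p q r s : p \notin Y -> p != q -> p != r ->
  swap (Y :|: [set p; q; r]) p s = Y :|: [set s; q; r].
Proof.
move=> pY pq pr; apply/setP => z; rewrite !inE.
case: (eqVneq z p) => [->|_] /=; first by rewrite (negbTE pY) (negbTE pq) (negbTE pr) !orbF.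
by case: (z \in Y); case: (z == s); case: (z == q); case: (z == r).
Qed.

Lemma swapU3m p q r s : q \notin Y -> q != p -> q != r ->
  swap (Y :|: [set p; q; r]) q s = Y :|: [set p; s; r].
Proof. by move=> *; rewrite set3C12 swapU3l // set3C12. Qed.

Lemma swapU3r p q r s : r \notin Y -> r != p -> r != q ->
  swap (Y :|: [set p; q; r]) r s = Y :|: [set p; q; s].
Proof. by move=> *; rewrite set3C13 swapU3l // set3C13. Qed.

Lemma cardsU3 p q r : p \notin Y -> q \notin Y -> r \notin Y -> uniq [:: p; q; r] ->
  #|Y :|: [set p; q; r]| = #|Y| + 3.
Proof.
move=> pY qY rY; rewrite /= !inE !negb_or !andbT => /andP[/andP[pq pr] qr].
have -> : Y :|: [set p; q; r] = p |: (q |: (r |: Y)).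
  by apply/setP => z; rewrite !inE; case: (z \in Y); case: (z == p); case: (z == q); case: (z == r).
rewrite !cardsU1 !inE.
by rewrite (negbTE pY) (negbTE qY) (negbTE rY) (negbTE pq) (negbTE pr) (negbTE qr) !add1n addn3.
Qed.

Lemma PN_set3 w p q r : w \in cnbhd e p -> w \notin cnbhd e q -> w \notin cnbhd e r ->
  w \in PN e p [set p; q; r].
Proof.
move=> wp wq wr; apply/PNP; split=> // z; move: wq wr.
by rewrite !inE -orbA => wq wr /or3P[]/eqP-> //; rewrite eqxx.
Qed.

Lemma private_nbr3 p q r :
  irredundant e (Y :|: [set p; q; r]) -> p \notin Y -> uniq [:: p; q; r] -> e p q ->
  exists w, [/\ e p w, w \notin cnbhdS e Y, w \notin cnbhd e q & w \notin cnbhd e r].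
Proof.
move=> IS pY; rewrite /= !inE !negb_or !andbT => /andP[/andP[pq pr] _] epq.
have [pS qS rS] : [/\ p \in [set p; q; r], q \in [set p; q; r] & r \in [set p; q; r]].
  by rewrite !inE !eqxx !orbT.
have [w [epw wY wN]] := private_nbr e_sym e_irr IS pS pY qS epq.
by exists w; split=> //; apply: wN; rewrite // eq_sym.
Qed.

Hypothesis Y_indep : {in Y &, forall y z, ~~ e y z}.

Lemma IRset_U3 p q r wp wq wr :
  #|Y| + 3 = IR e -> uniq [:: p; q; r] ->
  p \notin cnbhdS e Y -> q \notin cnbhdS e Y -> r \notin cnbhdS e Y ->
  [&& wp \in cnbhd e p, wp \notin cnbhd e q, wp \notin cnbhd e r & wp \notin cnbhdS e Y] ->
  [&& wq \in cnbhd e q, wq \notin cnbhd e p, wq \notin cnbhd e r & wq \notin cnbhdS e Y] ->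
  [&& wr \in cnbhd e r, wr \notin cnbhd e p, wr \notin cnbhd e q & wr \notin cnbhdS e Y] ->
  IRset e (Y :|: [set p; q; r]).
Proof.
move=> IR_Y uniq_pqr pY qY rY /and4P[wpp wpq wpr wpY] /and4P[wqq wqp wqr wqY].
case/and4P=> wrr wrp wrq wrY.
have notin_Y x : x \notin cnbhdS e Y -> x \notin Y by apply: contra; apply/subsetP/sub_cnbhdS.
apply/andP; split; last by rewrite cardsU3 ?notin_Y // IR_Y.
apply: irredundant_setU => // s; rewrite !inE -orbA => /or3P[]/eqP-> //; apply/set0Pn.
- by exists wp; rewrite in_setD wpY PN_set3.
- by exists wq; rewrite in_setD wqY set3C12 PN_set3.
- by exists wr; rewrite in_setD wrY set3C13 PN_set3.
Qed.

End IsolatedTriples.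

Section ThreeSwaps.
Variables (T : finType) (e : rel T).
Hypotheses (e_sym : symmetric e) (e_irr : irreflexive e).
Variables (X Y : {set T}) (a b c a' b' c' : T).
Hypotheses (Y_def : Y = X :\: [set a; b; c]) (abcX : [set a; b; c] \subset X).
Hypothesis uniq_abc : uniq [:: a; b; c].
Hypothesis Y_isolated : {in Y & X, forall y x, ~~ e y x}.
Hypotheses (a'_epn : a' \in EPN e a X) (b'_epn : b' \in EPN e b X) (c'_epn : c' \in EPN e c X).
Local Notation D1 := (swap X a a').
Local Notation D2 := (swap D1 b b').
Local Notation X' := (swap D2 c c').
Hypotheses (X_IR : IRset e X) (D1_IR : IRset e D1) (D2_IR : IRset e D2) (X'_IR : IRset e X').

Let X_def : X = Y :|: [set a; b; c].
Proof. by rewrite Y_def setUC -{1}(setID X [set a; b; c]) (setIidPr abcX). Qed.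
Let YX : Y \subset X. Proof. by rewrite X_def subsetUl. Qed.
Let Y_indep : {in Y &, forall y z, ~~ e y z}.
Proof. by move=> y z yY zY; apply: Y_isolated; rewrite // (subsetP YX). Qed.
Let aX : a \in X. Proof. by rewrite X_def !inE eqxx !orbT. Qed.
Let bX : b \in X. Proof. by rewrite X_def !inE eqxx !orbT. Qed.
Let cX : c \in X. Proof. by rewrite X_def !inE eqxx !orbT. Qed.
Let aY : a \notin Y. Proof. by rewrite Y_def !inE eqxx. Qed.
Let bY : b \notin Y. Proof. by rewrite Y_def !inE eqxx !orbT. Qed.
Let cY : c \notin Y. Proof. by rewrite Y_def !inE eqxx !orbT. Qed.
Let ab : a != b. Proof. by case/and3P: uniq_abc; rewrite !inE negb_or => /andP[]. Qed.
Let ac : a != c. Proof. by case/and3P: uniq_abc; rewrite !inE negb_or => /andP[]. Qed.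
Let bc : b != c. Proof. by case/and3P: uniq_abc; rewrite !inE. Qed.
Let a'X : a' \notin X := EPN_notin a'_epn.
Let b'X : b' \notin X := EPN_notin b'_epn.
Let c'X : c' \notin X := EPN_notin c'_epn.
Let Eaa' : e a a' := EPN_edge aX a'_epn.
Let Ebb' : e b b' := EPN_edge bX b'_epn.
Let Ecc' : e c c' := EPN_edge cX c'_epn.
Let Nab' : ~~ e a b' := EPN_nedge b'_epn aX ab.
Let Nac' : ~~ e a c' := EPN_nedge c'_epn aX ac.
Let Nbc' : ~~ e b c' := EPN_nedge c'_epn bX bc.
Let Nba' : ~~ e b a'. Proof. by rewrite (EPN_nedge a'_epn) // eq_sym. Qed.
Let Nca' : ~~ e c a'. Proof. by rewrite (EPN_nedge a'_epn) // eq_sym. Qed.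
Let Ncb' : ~~ e c b'. Proof. by rewrite (EPN_nedge b'_epn) // eq_sym. Qed.
Let a'b' : a' != b' := EPN_neq aX a'_epn b'_epn ab.
Let a'c' : a' != c' := EPN_neq aX a'_epn c'_epn ac.
Let b'c' : b' != c' := EPN_neq bX b'_epn c'_epn bc.
Let neqX x y : x \in X -> y \notin X -> x != y.
Proof. by move=> xX yX; apply: contraNneq yX => <-. Qed.
Let out_notin x : x \notin cnbhdS e Y -> x \notin Y.
Proof. by apply: contra; apply/subsetP/sub_cnbhdS. Qed.
Let old_out x : x \in X -> x \notin Y -> x \notin cnbhdS e Y.
Proof. by move=> xX xY; apply: notin_cnbhdS => // y yY; apply: Y_isolated. Qed.
Let new_out x x' : x \notin Y -> x' \in EPN e x X -> x' \notin cnbhdS e Y.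
Proof.
move=> xY x'E; apply: notin_cnbhdS => [|y yY].
  by apply: contra (EPN_notin x'E); apply/subsetP.
by apply: EPN_nedge x'E _ _; [apply/(subsetP YX) | apply: contraNneq xY => <-].
Qed.
Let a_out : a \notin cnbhdS e Y := old_out aX aY.
Let b_out : b \notin cnbhdS e Y := old_out bX bY.
Let c_out : c \notin cnbhdS e Y := old_out cX cY.
Let a'_out : a' \notin cnbhdS e Y := new_out aY a'_epn.
Let b'_out : b' \notin cnbhdS e Y := new_out bY b'_epn.
Let c'_out : c' \notin cnbhdS e Y := new_out cY c'_epn.

Ltac solve_atom := solve [ done | by rewrite eq_sym | by rewrite e_sym
  | by apply: neqX | by rewrite eq_sym; apply: neqX | by apply: out_notin
  | by apply: edge_neq | by rewrite eq_sym; apply: edge_neq ].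

Ltac solve_bool :=
  lazymatch goal with
  | |- is_true (_ && _) => apply/andP; split; solve_bool
  | |- is_true (~~ (_ || _)) => apply/norP; split; solve_bool
  | |- is_true (~~ (_ && _)) => rewrite negb_and; solve_bool
  | |- is_true (~~ ~~ _) => rewrite negbK; solve_bool
  | |- is_true (_ || _) => first [apply/orP; left; solve_bool | apply/orP; right; solve_bool]
  | |- _ => solve_atom
  end.

Ltac solve_facts := rewrite /= ?inE; solve_bool.

Let IR_Y : #|Y| + 3 = IR e.
Proof. by case/andP: X_IR => _ /eqP <-; rewrite X_def cardsU3. Qed.

Let D1_def : D1 = Y :|: [set a'; b; c].
Proof. by rewrite X_def swapU3l. Qed.

Let D2_def : D2 = Y :|: [set a'; b'; c].
Proof. by rewrite D1_def swapU3m //; solve_facts. Qed.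

Let X'_def : X' = Y :|: [set a'; b'; c'].
Proof. by rewrite D2_def swapU3r //; solve_facts. Qed.

Lemma C4_of_edge_bc : e b c -> has_induced_C4 e.
Proof.
move=> ebc.
have D1_irr : irredundant e (Y :|: [set a'; b; c]) by rewrite -D1_def; case/andP: D1_IR.
have [u [ebu uY Ncu Na'u]] : exists u,
    [/\ e b u, u \notin cnbhdS e Y, u \notin cnbhd e c & u \notin cnbhd e a'].
  by apply: (private_nbr3 e_sym e_irr); [rewrite set3C13 set3C23 | | solve_facts |].
have [w [ecw wY Nbw Na'w]] : exists w,
    [/\ e c w, w \notin cnbhdS e Y, w \notin cnbhd e b & w \notin cnbhd e a'].
  by apply: (private_nbr3 e_sym e_irr); [rewrite set3C13 | | solve_facts | rewrite e_sym].
move: Ncu Na'u Nbw Na'w; rewrite !inE !negb_or => /andP[uc Ncu] /andP[ua' Na'u].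
move=> /andP[wb Nbw] /andP[wa' Na'w].
have uw : u != w by apply: contraTneq ebu => ->.
apply: (swap_square_C4 e_sym e_irr (A := D1) (p := b) (p' := u) (q := c) (q' := w)).
all: rewrite ?D1_def ?(swapU3l, swapU3m, swapU3r) //; try solve_facts.
- by rewrite -D1_def.
- by apply: (IRset_U3 e_sym Y_indep (wp := a') (wq := u) (wr := c)); solve_facts.
- by apply: (IRset_U3 e_sym Y_indep (wp := a') (wq := b) (wr := w)); solve_facts.
- by apply: (IRset_U3 e_sym Y_indep (wp := a') (wq := b) (wr := c)); solve_facts.
Qed.

Lemma C4_of_edge_a'b' : ~~ e b c -> e a' b' -> has_induced_C4 e.
Proof.
move=> Nbc ea'b'.
have D2_irr : irredundant e (Y :|: [set a'; b'; c]) by rewrite -D2_def; case/andP: D2_IR.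
have [u [ea'u uY Nb'u Ncu]] : exists u,
    [/\ e a' u, u \notin cnbhdS e Y, u \notin cnbhd e b' & u \notin cnbhd e c].
  by apply: (private_nbr3 e_sym e_irr); solve_facts.
move: Nb'u Ncu; rewrite !inE !negb_or => /andP[ub' Nb'u] /andP[uc Ncu].
have ub : u != b by apply: contraNneq Nb'u => ->; rewrite e_sym.
apply: (swap_square_C4 e_sym e_irr (A := D1) (p := b) (p' := b') (q := a') (q' := u)).
all: rewrite ?D1_def ?(swapU3l, swapU3m, swapU3r) //; try solve_facts.
- by rewrite -D1_def.
- by rewrite -D2_def.
- by apply: (IRset_U3 e_sym Y_indep (wp := a') (wq := b') (wr := c)); solve_facts.
- by apply: (IRset_U3 e_sym Y_indep (wp := u) (wq := b') (wr := c)); solve_facts.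
Qed.

Lemma C4_of_nedge_a'c' : ~~ e a' c' -> has_induced_C4 e.
Proof.
move=> Na'c'.
apply: (swap_square_C4 e_sym e_irr (A := D1) (p := b) (p' := b') (q := c) (q' := c')).
all: rewrite ?D1_def ?(swapU3l, swapU3m, swapU3r) //; try solve_facts.
- by rewrite -D1_def.
- by rewrite -D2_def.
- by apply: (IRset_U3 e_sym Y_indep (wp := a') (wq := b) (wr := c')); solve_facts.
- by rewrite -X'_def.
Qed.

Lemma C4_of_nedge_ac : ~~ e a c -> has_induced_C4 e.
Proof.
move=> Nac.
apply: (swap_square_C4 e_sym e_irr (A := X) (p := a) (p' := a') (q := b) (q' := b')).
all: rewrite ?X_def ?(swapU3l, swapU3m, swapU3r) //; try solve_facts.
- by rewrite -X_def.
- by rewrite -D1_def.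
- by apply: (IRset_U3 e_sym Y_indep (wp := a) (wq := b') (wr := c)); solve_facts.
- by rewrite -D2_def.
Qed.

(* Any two of the six sets of the S(2,2) below are told apart by one of a, b, c, a',
   and any two non-adjacent ones differ in two of a, b, c, a' or by the non-edge c a'. *)
Ltac distinct_sets := first
  [ by apply: (setD_neq (x := a)); solve_facts | by apply: (setD_neq (x := b)); solve_facts
  | by apply: (setD_neq (x := c)); solve_facts | by apply: (setD_neq (x := a')); solve_facts ].

Ltac nonadjacent_sets := first
  [ by apply: (nIRadj_setD e_irr (x := a) (z := b)); solve_facts
  | by apply: (nIRadj_setD e_irr (x := b) (z := c)); solve_facts
  | by apply: (nIRadj_setD e_irr (x := a') (z := b)); solve_facts
  | by apply: (nIRadj_nedge e_irr (x := c) (y := a')); solve_facts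
  | by apply: (nIRadj_nedge e_irr (x := a') (y := c)); solve_facts ].

Lemma S22_of_nedges : ~~ e b c -> ~~ e a' b' -> e a c -> e a' c' ->
  has_induced_S22_antipodal e X X'.
Proof.
move=> Nbc Na'b' eac ea'c'.
have L1_IR : IRset e (swap D1 c a).
  rewrite D1_def swapU3r; try solve_facts.
  by apply: (IRset_U3 e_sym Y_indep (wp := c') (wq := b') (wr := c)); solve_facts.
have L2_IR : IRset e (swap D2 a' c').
  rewrite D2_def swapU3l; try solve_facts.
  by apply: (IRset_U3 e_sym Y_indep (wp := a') (wq := b) (wr := a)); solve_facts.
exists (swap D1 c a), D1, D2, (swap D2 a' c'); split.
  by rewrite /= !inE !negb_or !andbT; repeat (apply/andP; split); distinct_sets.
repeat split; try by [apply: IRadj_swap; solve_facts | apply/IRadj_sym/IRadj_swap; solve_facts].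
all: nonadjacent_sets.
Qed.

Lemma three_swaps_C4_or_S22 : has_induced_C4 e \/ has_induced_S22_antipodal e X X'.
Proof.
have [ebc|Nbc] := boolP (e b c); first by left; exact: C4_of_edge_bc.
have [ea'b'|Na'b'] := boolP (e a' b'); first by left; exact: C4_of_edge_a'b'.
have [ea'c'|Na'c'] := boolP (e a' c'); last by left; exact: C4_of_nedge_a'c'.
have [eac|Nac] := boolP (e a c); last by left; exact: C4_of_nedge_ac.
by right; exact: S22_of_nedges.
Qed.

End ThreeSwaps.

Theorem lemma5p1 (T : finType) (e : rel T)
  (e_sym : symmetric e) (e_irr : irreflexive e)
  (X : {set T}) (x1 x2 x3 x1' x2' x3' : T) :
  IRconnected e ->
  IRset e X ->
  uniq [:: x1; x2; x3] ->
  x1 \in X -> x2 \in X -> x3 \in X ->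
  (forall x, x \in X -> posdeg_in e X x = (x \in [set x1; x2; x3])) ->
  x1' \in EPN e x1 X -> x2' \in EPN e x2 X -> x3' \in EPN e x3 X ->
  IRdist e X ((X :\: [set x1; x2; x3]) :|: [set x1'; x2'; x3']) 3 ->
  has_induced_C4 e \/
  has_induced_S22_antipodal e X ((X :\: [set x1; x2; x3]) :|: [set x1'; x2'; x3']).
Proof.
move=> _ X_IR uniq_x x1X x2X x3X deg_X x1'E x2'E x3'E [[_ [p [size_p [walk last_p]]]] _].
have isolated : {in X :\: [set x1; x2; x3] & X, forall y z, ~~ e y z}.
  move=> y z /setDP[yX yx] zX; apply: contraNN yx => eyz.
  by rewrite -deg_X //; apply/existsP; exists z; rewrite zX eyz.
have xX : {subset [set x1; x2; x3] <= X} by move=> z; rewrite mem_set3 !inE => /or3P[]/eqP->.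
have uniq_x' : uniq [:: x1'; x2'; x3'].
  move: uniq_x; rewrite /= !inE !negb_or !andbT => /andP[/andP[x12 x13] x23].
  by rewrite (EPN_neq x1X x1'E x2'E) ?(EPN_neq x1X x1'E x3'E) ?(EPN_neq x2X x2'E x3'E).
have x'E x' : x' \in [set x1'; x2'; x3'] -> exists2 x, x \in X & x' \in EPN e x X.
  by rewrite mem_set3 !inE => /or3P[]/eqP->; [exists x1 | exists x2 | exists x3].
have x'X : {subset [set x1'; x2'; x3'] <= ~: X}.
  by move=> x' /x'E[x _ /EPN_notin]; rewrite in_setC.
have [u1 [u2 [u3 [v1 [v2 [v3 [Eu Ev uniq_u [e1 e2 e3] [D1_IR D2_IR X'_IR X'E]]]]]]]] :=
  walk3_exchanges e_irr walk size_p last_p uniq_x uniq_x' xX x'X.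
have epn u v : u \in [set u1; u2; u3] -> v \in [set v1; v2; v3] -> e u v -> v \in EPN e u X.
  by rewrite Eu Ev => /xX uX /x'E[x _ vE]; apply: EPN_of_adj vE uX.
have abcX : [set u1; u2; u3] \subset X by rewrite Eu; apply/subsetP.
rewrite -last_p X'E.
apply: (three_swaps_C4_or_S22 e_sym e_irr (Y := X :\: [set x1; x2; x3]) _ abcX); rewrite ?Eu //.
all: by apply: epn; rewrite ?inE ?eqxx ?orbT.
Qed.
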